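(* Let $v>0$ and let $y^*\in\mathbb{R}^{n^+}$ be defined by $y^*_j=Y$ for $1\le j\le J$ and $y^*_j=\left(\frac{J h^+_j}{S}\right)^{\frac{\alpha}{1-\alpha}}Y$ for $J<j\le n^+$, where $J$ is the transitional index, $S=\sum_{j'=1}^{J}h^+_{j'}$ and $Y=\frac{v S^{\alpha/(1-\alpha)}}{S^{1/(1-\alpha)}+J^{\alpha/(1-\alpha)}\sum_{j'=J+1}^{n^+}(h^+_{j'})^{1/(1-\alpha)}}$. Put $\bar\alpha=1/\alpha$ and define $$\mu_j=-\frac{\bar\alpha}{v}\Big[\sum_{j'=1}^{n^+}(y^*_{j'})^{\bar\alpha}\Big]\Big(\sum_{j'=j}^{n^+}h^+_{j'}\Big)+\bar\alpha\Big[\sum_{j'=j}^{n^+}(y^*_{j'})^{\bar\alpha-1}\Big]\quad(j=1,\dots,n^+),\qquad \Lambda=-\frac{\bar\alpha\sum_{j'=1}^{n^+}(y^*_{j'})^{\bar\alpha}}{v}.$$ Then $(y,\mu,\Lambda)=(y^*,\mu,\Lambda)$ satisfies: $\bar\alpha y_j^{\bar\alpha-1}+\mu_{j+1}-\mu_j+\Lambda h^+_j=0$ for all $j\in\{1,\dots,n^+-1\}$; $\bar\alpha y_{n^+}^{\bar\alpha-1}-\mu_{n^+}+\Lambda h^+_{n^+}=0$; $\mu_{j+1}(y_j-y_{j+1})=0$ for $j\in\{1,\dots,n^+-1\}$ and $\mu_1y_1=0$; $\sum_{j=1}^{n^+}h^+_jy_j=v$; $\mu_j\ge 0$ for all $j$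 and $0\le y_1\le\cdots\le y_{n^+}$.
   Context: Fix $N\in\mathbb{N}$, $\alpha\in(0,1)$ and an integer $1\le n^+\le N$. A function $f:[0,1]\to\mathbb{R}$ is inverse S-shaped if it is strictly increasing, continuously differentiable, and there is $x_0\in[0,1]$ such that $f'$ is strictly decreasing on $[0,x_0]$ and strictly increasing on $[x_0,1]$. Let $W^+:[0,1]\to[0,1]$ be inverse S-shaped with $W^+(0)=0$, $W^+(1)=1$, and $h^+_j:=W^+\!\left(\frac{n^+-j+1}{N}\right)-W^+\!\left(\frac{n^+-j}{N}\right)$ for $j=1,\dots,n^+$. The transitional index is $J:=\min\{j\in\{1,\dots,n^+\}: j\,h^+_{j+1}\ge \sum_{j'=1}^{j}h^+_{j'}\}$ with $h^+_{n^++1}=\infty$. (These conditions are the KKT conditions of minimizing $\sum_j y_j^{1/\alpha}$ subject to $0\le y_1\le\cdots\le y_{n^+}$, $\sum_j h^+_jy_j=v$.) *)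

From Stdlib Require Import Reals.
From Coquelicot Require Import Coquelicot.
Open Scope R_scope.

(* sum_{j=a}^{b} f j  (zero if b < a) *)
Definition rsum (f : nat -> R) (a b : nat) : R := sum_n_m f a b.

Definition unit_itv (x : R) : Prop := 0 <= x <= 1.

Definition has_deriv_on01 (f : R -> R) (x d : R) : Prop :=
  filterlim (fun t => (f t - f x) / (t - x))
    (within (fun t => t <> x /\ unit_itv t) (locally x)) (locally d).

Definition inverse_S_shaped (f : R -> R) : Prop :=
  (forall x y, unit_itv x -> unit_itv y -> x < y -> f x < f y) /\
  exists f' : R -> R,
    (forall x, unit_itv x -> has_deriv_on01 f x (f' x)) /\
    (forall x, unit_itv x ->
       filterlim f' (within unit_itv (locally x)) (locally (f' x))) /\
    exists x0, unit_itv x0 /\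
      (forall x y, 0 <= x -> x < y -> y <= x0 -> f' y < f' x) /\
      (forall x y, x0 <= x -> x < y -> y <= 1 -> f' x < f' y).

Definition hplus (W : R -> R) (N np : nat) (j : nat) : R :=
  W (INR (np + 1 - j) / INR N) - W (INR (np - j) / INR N).

(* The condition  j h^+_{j+1} >= sum_{j'=1}^j h^+_{j'}, with h^+_{n+ +1} = +infinity. *)
Definition trans_cond (W : R -> R) (N np : nat) (j : nat) : Prop :=
  j = np \/ INR j * hplus W N np (j + 1) >= rsum (hplus W N np) 1 j.

Definition is_transitional_index (W : R -> R) (N np J : nat) : Prop :=
  (1 <= J <= np)%nat /\ trans_cond W N np J /\
  (forall j, (1 <= j < J)%nat -> ~ trans_cond W N np j).

Section Candidate.
Variables (W : R -> R) (N np J : nat) (alpha v : R).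

Definition hp := hplus W N np.
Definition Ssum : R := rsum hp 1 J.
Definition Ybig : R :=
  v * Rpower Ssum (alpha / (1 - alpha)) /
  (Rpower Ssum (1 / (1 - alpha)) +
   Rpower (INR J) (alpha / (1 - alpha)) *
     rsum (fun j => Rpower (hp j) (1 / (1 - alpha))) (J + 1) np).

Definition ystar (j : nat) : R :=
  if (j <=? J)%nat then Ybig
  else Rpower (INR J * hp j / Ssum) (alpha / (1 - alpha)) * Ybig.

Definition abar : R := 1 / alpha.

Definition mu (j : nat) : R :=
  - (abar / v) * rsum (fun j' => Rpower (ystar j') abar) 1 np * rsum hp j np
  + abar * rsum (fun j' => Rpower (ystar j') (abar - 1)) j np.

Definition Lambda : R := - (abar * rsum (fun j' => Rpower (ystar j') abar) 1 np) / v.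
End Candidate.

From Stdlib Require Import Reals Lra Lia.
From Coquelicot Require Import Coquelicot.
Open Scope R_scope.

(* Put S = h_1 + ... + h_J, kappa = (J / S) Y^(abar - 1) and let the excess be
   e_j = S / J - h_j for j <= J and e_j = 0 beyond J.  Then
   (y*_j)^(abar - 1) = kappa (h_j + e_j) and the excesses sum to zero, so
   sum_j (y*_j)^abar = kappa v, Lambda = - abar kappa and
   mu_j = abar kappa (e_j + ... + e_{n+}); stationarity and complementary
   slackness become identities.  mu_j >= 0 says that the prefix means of
   h_1, ..., h_J do not fall below their value at J, which is what the
   minimality of J gives.  Monotonicity of y* beyond J needs h to be
   nondecreasing there: by the mean value theorem the increments of an inverse
   S-shaped function over consecutive equal intervals have no strict interior
   local maximum, so a descent of h after J would propagate back to h_1 and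
   contradict J h_{J+1} >= S. *)

Lemma rsum_split (f : nat -> R) n m k : (n <= S m)%nat -> (m <= k)%nat ->
  rsum f n k = rsum f n m + rsum f (S m) k.
Proof. exact (sum_n_m_Chasles f n m k). Qed.

Lemma rsum_single (f : nat -> R) n : rsum f n n = f n.
Proof. exact (sum_n_n f n). Qed.

Lemma rsum_first (f : nat -> R) n m : (n <= m)%nat -> rsum f n m = f n + rsum f (S n) m.
Proof. intros. now rewrite (rsum_split f n n m), rsum_single by lia. Qed.

Lemma rsum_last (f : nat -> R) n m : (n <= S m)%nat -> rsum f n (S m) = rsum f n m + f (S m).
Proof. exact (sum_n_Sm f n m). Qed.

Lemma rsum_empty (f : nat -> R) n m : (m < n)%nat -> rsum f n m = 0.
Proof. exact (sum_n_m_zero f n m). Qed.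

Lemma rsum_ext (f g : nat -> R) n m :
  (forall k, (n <= k <= m)%nat -> f k = g k) -> rsum f n m = rsum g n m.
Proof. exact (sum_n_m_ext_loc f g n m). Qed.

Lemma rsum_plus (f g : nat -> R) n m :
  rsum (fun i => f i + g i) n m = rsum f n m + rsum g n m.
Proof. exact (sum_n_m_plus f g n m). Qed.

Lemma rsum_scal c (f : nat -> R) n m : rsum (fun i => c * f i) n m = c * rsum f n m.
Proof. exact (sum_n_m_mult_l c f n m). Qed.

Lemma rsum_const c n m : rsum (fun _ => c) n m = INR (S m - n) * c.
Proof. exact (sum_n_m_const n m c). Qed.

Lemma rsum_minus (f g : nat -> R) n m :
  rsum (fun i => f i - g i) n m = rsum f n m - rsum g n m.
Proof.
  rewrite (rsum_ext _ (fun i => f i + -1 * g i)) by (intros; ring).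
  rewrite rsum_plus, rsum_scal. ring.
Qed.

Lemma rsum_zero (f : nat -> R) n m :
  (forall k, (n <= k <= m)%nat -> f k = 0) -> rsum f n m = 0.
Proof. intros Hf. rewrite (rsum_ext f (fun _ => 0)), rsum_const by exact Hf. ring. Qed.

Lemma rsum_nonneg (f : nat -> R) n m :
  (forall k, (n <= k <= m)%nat -> 0 <= f k) -> 0 <= rsum f n m.
Proof.
  induction m as [|m IH]; intros Hf.
  - destruct n; [rewrite rsum_single; apply Hf; lia | rewrite rsum_empty by lia; lra].
  - destruct (Nat.le_gt_cases n (S m)) as [Hn | Hn]; [| rewrite rsum_empty by lia; lra].
    destruct (Nat.eq_dec n (S m)) as [-> | Hne]; [rewrite rsum_single; apply Hf; lia |].
    rewrite rsum_last by lia.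
    assert (0 <= f (S m)) by (apply Hf; lia).
    assert (0 <= rsum f n m) by (apply IH; intros; apply Hf; lia).
    lra.
Qed.

Lemma Rpower_pos x z : 0 < Rpower x z.
Proof. apply exp_pos. Qed.

Lemma Rpower_div x y z : 0 < x -> 0 < y -> Rpower (x / y) z = Rpower x z / Rpower y z.
Proof.
  intros Hx Hy. unfold Rpower, Rdiv.
  rewrite ln_mult, ln_Rinv, <- exp_Ropp, <- exp_plus by auto with real.
  f_equal. ring.
Qed.

Lemma has_deriv_on01_eps W x d : has_deriv_on01 W x d -> forall eps, 0 < eps ->
  exists del, 0 < del /\ forall t, unit_itv t -> t <> x -> Rabs (t - x) < del ->
    Rabs ((W t - W x) / (t - x) - d) < eps.
Proof.
  intros Hd eps Heps.
  destruct (Hd _ (locally_ball d (mkposreal eps Heps))) as [del Hdel].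
  exists del. split; [apply cond_pos |].
  intros t Ht Htx Hlt. exact (Hdel t Hlt (conj Htx Ht)).
Qed.

Lemma has_deriv_on01_continuous W x d : has_deriv_on01 W x d -> forall eps, 0 < eps ->
  exists del, 0 < del /\ forall t, unit_itv t -> Rabs (t - x) < del -> Rabs (W t - W x) < eps.
Proof.
  intros Hd eps Heps.
  destruct (has_deriv_on01_eps W x d Hd 1 Rlt_0_1) as [del [Hdel Hq]].
  set (M := Rabs d + 1).
  assert (HM : 0 < M) by (unfold M; pose proof (Rabs_pos d); lra).
  exists (Rmin del (eps / M)). split; [apply Rmin_pos; [lra | apply Rdiv_lt_0_compat; lra] |].
  intros t Ht Htx.
  destruct (Req_dec t x) as [-> | Hne]; [unfold Rminus; rewrite Rplus_opp_r, Rabs_R0; lra |].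
  assert (Hquot : Rabs ((W t - W x) / (t - x)) <= M).
  { specialize (Hq t Ht Hne (Rlt_le_trans _ _ _ Htx (Rmin_l _ _))).
    pose proof (Rabs_triang_inv ((W t - W x) / (t - x)) d). unfold M. lra. }
  assert (Hsmall : M * Rabs (t - x) < eps).
  { assert (Htx' : Rabs (t - x) < eps / M) by exact (Rlt_le_trans _ _ _ Htx (Rmin_r _ _)).
    apply (Rmult_lt_compat_l M) in Htx'; [| exact HM].
    replace (M * (eps / M)) with eps in Htx' by (field; lra). exact Htx'. }
  replace (W t - W x) with ((W t - W x) / (t - x) * (t - x)) by (field; lra).
  rewrite Rabs_mult.
  pose proof (Rmult_le_compat_r _ _ _ (Rabs_pos (t - x)) Hquot). lra.
Qed.

Definition clamp (a b t : R) : R := Rmax a (Rmin b t).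

Lemma clamp_in a b t : a <= b -> a <= clamp a b t <= b.
Proof. intros; unfold clamp, Rmax, Rmin; repeat destruct Rle_dec; lra. Qed.

Lemma clamp_id a b t : a <= t <= b -> clamp a b t = t.
Proof. intros; unfold clamp, Rmax, Rmin; repeat destruct Rle_dec; lra. Qed.

Lemma clamp_dist a b t c : a <= c <= b -> Rabs (clamp a b t - c) <= Rabs (t - c).
Proof.
  intros; unfold clamp, Rmax, Rmin; repeat destruct Rle_dec;
    unfold Rabs; repeat destruct Rcase_abs; lra.
Qed.

Section Mean_value.
Variables (W f' : R -> R) (a b : R).
Hypotheses (Ha : 0 <= a) (Hab : a < b) (Hb : b <= 1)
  (HW' : forall x, unit_itv x -> has_deriv_on01 W x (f' x)).

(* The derivative of [W] is only one-sided at [a] and [b], and [W] need not be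
   continuous there as a function on the line; [W] composed with the clamp to
   [[a,b]] is, so the standard library's mean value theorem applies to it. *)
Let F (t : R) : R := W (clamp a b t).

Lemma clamp_derivable c : a < c < b -> derivable_pt_lim F c (f' c).
Proof.
  intros Hc eps Heps.
  destruct (has_deriv_on01_eps W c (f' c) (HW' c ltac:(unfold unit_itv; lra)) eps Heps)
    as [del [Hdel Hq]].
  assert (Hpos : 0 < Rmin del (Rmin (c - a) (b - c))) by (repeat apply Rmin_pos; lra).
  exists (mkposreal _ Hpos). intros k Hk Hkl. simpl in Hkl.
  pose proof (Rmin_l del (Rmin (c - a) (b - c))).
  pose proof (Rmin_l (c - a) (b - c)). pose proof (Rmin_r (c - a) (b - c)).
  pose proof (Rmin_r del (Rmin (c - a) (b - c))).
  assert (Hk' : - Rabs k <= k <= Rabs k) by (unfold Rabs; destruct Rcase_abs; lra).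
  unfold F. rewrite !clamp_id by lra.
  specialize (Hq (c + k) ltac:(unfold unit_itv; lra) ltac:(lra)).
  replace (c + k - c) with k in Hq by ring. apply Hq. lra.
Qed.

Lemma clamp_continuous c : a <= c <= b -> continuity_pt F c.
Proof.
  intros Hc eps Heps.
  destruct (has_deriv_on01_continuous W c (f' c) (HW' c ltac:(unfold unit_itv; lra)) eps Heps)
    as [del [Hdel Hcont]].
  exists del. split; [exact Hdel |]. intros t [_ Ht]. simpl in *. unfold R_dist in *.
  unfold F. rewrite (clamp_id a b c) by lra.
  pose proof (clamp_in a b t ltac:(lra)).
  apply Hcont; [unfold unit_itv; lra |].
  eapply Rle_lt_trans; [apply clamp_dist; lra | exact Ht].
Qed.

Lemma has_deriv_on01_MVT : exists c, a < c < b /\ W b - W a = f' c * (b - a).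
Proof.
  pose (pr1 := fun c (P : a < c < b) => exist _ (f' c) (clamp_derivable c P) : derivable_pt F c).
  pose (pr2 := fun c (_ : a < c < b) => derivable_pt_id c).
  destruct (MVT F id a b pr1 pr2 Hab clamp_continuous
              (fun c _ => derivable_continuous_pt _ _ (derivable_pt_id c))) as [c [P Hc]].
  exists c. split; [exact P |].
  simpl in Hc. rewrite derive_pt_id in Hc.
  unfold F, id in Hc. rewrite !clamp_id in Hc by lra. lra.
Qed.

End Mean_value.

Lemma inverse_S_shaped_increment W a d : inverse_S_shaped W ->
  0 < d -> 0 <= a - d -> a + 2 * d <= 1 ->
  W (a + d) - W a < W a - W (a - d) \/ W (a + d) - W a < W (a + 2 * d) - W (a + d).
Proof.
  intros [_ [f' [Hd [_ [x0 [_ [Hdec Hinc]]]]]]] Hd0 Hlo Hhi.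
  destruct (has_deriv_on01_MVT W f' (a - d) a) as [eta [Heta ->]]; try lra; auto.
  destruct (has_deriv_on01_MVT W f' a (a + d)) as [xi [Hxi ->]]; try lra; auto.
  destruct (has_deriv_on01_MVT W f' (a + d) (a + 2 * d)) as [ze [Hze ->]]; try lra; auto.
  (* [xi] lies on one side of [x0], where [f'] is strictly monotone. *)
  destruct (Rle_lt_dec xi x0).
  - left. pose proof (Hdec eta xi ltac:(lra) ltac:(lra) ltac:(lra)). nra.
  - right. pose proof (Hinc xi ze ltac:(lra) ltac:(lra) ltac:(lra)). nra.
Qed.

Lemma INR_div_unit_itv k N : (0 < N)%nat -> (k <= N)%nat -> unit_itv (INR k / INR N).
Proof.
  intros HN Hk. assert (0 < INR N) by (apply lt_0_INR; lia). split.
  - apply Rdiv_le_0_compat; [apply pos_INR | lra].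
  - apply Rmult_le_reg_r with (INR N); [lra |].
    unfold Rdiv. rewrite Rmult_assoc, Rinv_l, Rmult_1_r, Rmult_1_l by lra. now apply le_INR.
Qed.

Lemma hplus_pos W N np j : inverse_S_shaped W -> (np <= N)%nat -> (1 <= j <= np)%nat ->
  0 < hplus W N np j.
Proof.
  intros [Hincr _] HN Hj. unfold hplus.
  assert (0 < INR N) by (apply lt_0_INR; lia).
  assert (Hlt : INR (np - j) / INR N < INR (np + 1 - j) / INR N).
  { apply Rmult_lt_compat_r; [now apply Rinv_0_lt_compat | apply lt_INR; lia]. }
  pose proof (Hincr _ _ (INR_div_unit_itv (np - j) N ltac:(lia) ltac:(lia))
                 (INR_div_unit_itv (np + 1 - j) N ltac:(lia) ltac:(lia)) Hlt).
  lra.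
Qed.

(* [hplus j] is the increment of [W] on [[a, a + d]] with [a = (np - j)/N] and [d = 1/N];
   its neighbours [hplus (j + 1)] and [hplus (j - 1)] are the increments on the adjacent
   intervals to the left and to the right. *)
Lemma hplus_no_local_max W N np j : inverse_S_shaped W -> (np <= N)%nat ->
  (2 <= j <= np - 1)%nat ->
  hplus W N np j < hplus W N np (j + 1) \/ hplus W N np j < hplus W N np (j - 1).
Proof.
  intros HW HN Hj. unfold hplus.
  assert (HN0 : 0 < INR N) by (apply lt_0_INR; lia).
  set (a := INR (np - j) / INR N). set (d := 1 / INR N).
  assert (Ed : forall k : nat, (np - j + k <= N)%nat -> INR (np - j + k) / INR N = a + INR k * d)
    by (intros k _; unfold a, d; rewrite plus_INR; field; lra).
  assert (Eright : INR (np + 1 - j) / INR N = a + d)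
    by (replace (np + 1 - j)%nat with (np - j + 1)%nat by lia; rewrite Ed by lia; simpl; ring).
  assert (Eright' : INR (np - (j - 1)) / INR N = a + d)
    by (replace (np - (j - 1))%nat with (np - j + 1)%nat by lia; rewrite Ed by lia; simpl; ring).
  assert (Eright2 : INR (np + 1 - (j - 1)) / INR N = a + 2 * d)
    by (replace (np + 1 - (j - 1))%nat with (np - j + 2)%nat by lia; rewrite Ed by lia; simpl; ring).
  assert (Eleft : INR (np - (j + 1)) / INR N = a - d).
  { unfold a, d. replace (np - j)%nat with (np - (j + 1) + 1)%nat by lia.
    rewrite plus_INR. simpl. field. lra. }
  replace (np + 1 - (j + 1))%nat with (np - j)%nat by lia.
  fold a. rewrite Eright, Eright', Eright2, Eleft.
  assert (0 < d) by (unfold d; apply Rdiv_lt_0_compat; lra).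
  assert (Hlo : unit_itv (a - d)) by (rewrite <- Eleft; apply INR_div_unit_itv; lia).
  assert (Hhi : unit_itv (a + 2 * d)) by (rewrite <- Eright2; apply INR_div_unit_itv; lia).
  destruct Hlo, Hhi.
  destruct (inverse_S_shaped_increment W a d HW) as [C | C]; lra.
Qed.

Lemma descent_of_no_local_max (h : nat -> R) n j :
  (forall i, (2 <= i <= n - 1)%nat -> h i < h (i + 1)%nat \/ h i < h (i - 1)%nat) ->
  (j <= n - 1)%nat -> h (j + 1)%nat < h j ->
  forall i, (1 <= i <= j)%nat -> h (i + 1)%nat < h i.
Proof.
  intros Hmax Hj Hdesc.
  enough (Hd : forall d i, (i + d = j)%nat -> (1 <= i)%nat -> h (i + 1)%nat < h i)
    by (intros i Hi; apply (Hd (j - i)%nat); lia).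
  induction d as [|d IH]; intros i Hi H1.
  - now replace i with j by lia.
  - specialize (IH (i + 1)%nat ltac:(lia) ltac:(lia)).
    destruct (Hmax (i + 1)%nat ltac:(lia)) as [C | C]; [lra |].
    now replace (i + 1 - 1)%nat with i in C by lia.
Qed.

Lemma strict_decr_rsum_gt (h : nat -> R) J : (1 <= J)%nat ->
  (forall i, (1 <= i <= J)%nat -> h (i + 1)%nat < h i) ->
  INR J * h (J + 1)%nat < rsum h 1 J.
Proof.
  induction J as [|J IH]; intros HJ Hdec; [lia |].
  destruct (Nat.eq_dec J 0) as [-> | HJ0].
  - rewrite rsum_single. specialize (Hdec 1%nat ltac:(lia)). simpl in *. lra.
  - rewrite rsum_last, S_INR by lia.
    specialize (IH ltac:(lia) ltac:(intros; apply Hdec; lia)).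
    pose proof (Hdec (S J) ltac:(lia)) as Hlast.
    replace (J + 1)%nat with (S J) in IH by lia.
    pose proof (pos_INR J). nra.
Qed.

Lemma prefix_mean_nonincr (h : nat -> R) J :
  (forall i, (1 <= i < J)%nat -> INR i * h (i + 1)%nat < rsum h 1 i) ->
  forall m, (m <= J)%nat -> INR m * rsum h 1 J <= INR J * rsum h 1 m.
Proof.
  intros Hstep.
  enough (Hd : forall d m, (m + d = J)%nat -> INR m * rsum h 1 J <= INR J * rsum h 1 m)
    by (intros m Hm; apply (Hd (J - m)%nat); lia).
  induction d as [|d IH]; intros m Hm.
  - replace m with J by lia. lra.
  - destruct (Nat.eq_dec m 0) as [-> | Hm0].
    { rewrite (rsum_empty h 1 0) by lia. simpl. lra. }
    specialize (IH (S m) ltac:(lia)).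
    rewrite rsum_last, S_INR in IH by lia.
    specialize (Hstep m ltac:(lia)). rewrite Nat.add_1_r in Hstep.
    assert (0 < INR m) by (apply lt_0_INR; lia).
    pose proof (pos_INR J).
    pose proof (Rmult_le_compat_l (INR m) _ _ ltac:(lra) IH).
    pose proof (Rmult_le_compat_l (INR J) _ _ ltac:(lra) (Rlt_le _ _ Hstep)).
    apply Rmult_le_reg_l with (INR m + 1); lra.
Qed.

Lemma transitional_prefix_mean W N np J : is_transitional_index W N np J ->
  forall m, (m <= J)%nat ->
  INR m * rsum (hplus W N np) 1 J <= INR J * rsum (hplus W N np) 1 m.
Proof.
  intros [_ [_ Hmin]]. apply prefix_mean_nonincr.
  intros i Hi. apply Rnot_ge_lt. intros C. exact (Hmin i Hi (or_intror C)).
Qed.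

Lemma transitional_next W N np J : is_transitional_index W N np J -> (J < np)%nat ->
  rsum (hplus W N np) 1 J <= INR J * hplus W N np (J + 1).
Proof. intros [_ [[-> | C] _]] HJ; [lia | now apply Rge_le]. Qed.

Lemma transitional_nondecr W N np J : inverse_S_shaped W -> (np <= N)%nat ->
  is_transitional_index W N np J ->
  forall j, (J + 1 <= j <= np - 1)%nat -> hplus W N np j <= hplus W N np (j + 1).
Proof.
  intros HW HN HJ j Hj. apply Rnot_lt_le. intros Hlt.
  assert (Hdesc := descent_of_no_local_max (hplus W N np) np j
                     (fun i Hi => hplus_no_local_max W N np i HW HN Hi) ltac:(lia) Hlt).
  pose proof HJ as [HJ1 _].
  pose proof (strict_decr_rsum_gt (hplus W N np) J ltac:(lia) ltac:(intros; apply Hdesc; lia)).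
  pose proof (transitional_next W N np J HJ ltac:(lia)).
  lra.
Qed.

Definition excess (h : nat -> R) (J i : nat) : R :=
  if (i <=? J)%nat then rsum h 1 J / INR J - h i else 0.

Section Candidate.
Variables (W : R -> R) (N np J : nat) (alpha v : R).
Hypotheses (HJ : (1 <= J <= np)%nat) (Halpha : 0 < alpha < 1) (Hv : 0 < v).

Local Notation h := (hp W N np).
Local Notation SJ := (Ssum W N np J).
Local Notation Y := (Ybig W N np J alpha v).
Local Notation y := (ystar W N np J alpha v).
Local Notation ab := (abar alpha).
Local Notation p := (alpha / (1 - alpha)).
Local Notation e := (excess (hp W N np) J).

Hypothesis h_pos : forall j, (1 <= j <= np)%nat -> 0 < h j.
Hypothesis h_prefix_mean : forall m, (m <= J)%nat -> INR m * SJ <= INR J * rsum h 1 m.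
Hypothesis h_next : (J < np)%nat -> SJ <= INR J * h (J + 1).
Hypothesis h_nondecr : forall j, (J + 1 <= j <= np - 1)%nat -> h j <= h (j + 1).

Lemma INR_J_pos : 0 < INR J.
Proof. apply lt_0_INR. lia. Qed.

Lemma Ssum_pos : 0 < SJ.
Proof.
  unfold Ssum. rewrite rsum_first by lia.
  pose proof (h_pos 1 ltac:(lia)).
  assert (0 <= rsum h 2 J) by (apply rsum_nonneg; intros; left; apply h_pos; lia).
  lra.
Qed.

Lemma Ybig_pos : 0 < Y.
Proof.
  unfold Ybig. apply Rdiv_lt_0_compat.
  - apply Rmult_lt_0_compat; [lra | apply Rpower_pos].
  - pose proof (Rpower_pos SJ (1 / (1 - alpha))).
    assert (0 <= Rpower (INR J) p *
                 rsum (fun j => Rpower (h j) (1 / (1 - alpha))) (J + 1) np).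
    { apply Rmult_le_pos; [left; apply Rpower_pos |].
      apply rsum_nonneg. intros. left. apply Rpower_pos. }
    lra.
Qed.

Lemma ystar_le j : (j <= J)%nat -> y j = Y.
Proof. intros Hj. unfold ystar. now rewrite (proj2 (Nat.leb_le j J) Hj). Qed.

Lemma ystar_gt j : (J < j)%nat -> y j = Rpower (INR J * h j / SJ) p * Y.
Proof. intros Hj. unfold ystar. now rewrite (proj2 (Nat.leb_gt j J) Hj). Qed.

Lemma ystar_pos j : 0 < y j.
Proof.
  pose proof Ybig_pos. unfold ystar. destruct (j <=? J)%nat; [lra |].
  apply Rmult_lt_0_compat; [apply Rpower_pos | lra].
Qed.

Lemma ystar_nondecr j : (1 <= j <= np - 1)%nat -> y j <= y (j + 1)%nat.
Proof.
  intros Hj. pose proof Ybig_pos. pose proof Ssum_pos. pose proof INR_J_pos.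
  destruct (Nat.le_gt_cases (j + 1) J) as [C | C]; [rewrite !ystar_le by lia; lra |].
  rewrite (ystar_gt (j + 1)) by lia.
  assert (Hratio : 0 < INR J * h (j + 1)%nat / SJ)
    by (apply Rdiv_lt_0_compat; [apply Rmult_lt_0_compat; [| apply h_pos; lia] |]; lra).
  destruct (Nat.eq_dec j J) as [-> | Hne].
  - rewrite ystar_le by lia.
    rewrite <- (Rmult_1_l Y) at 1. apply Rmult_le_compat_r; [lra |].
    apply Rle_trans with (Rpower (INR J * h (J + 1)%nat / SJ) 0); [rewrite Rpower_O; lra |].
    apply Rle_Rpower; [| apply Rlt_le, Rdiv_lt_0_compat; lra].
    apply Rle_div_r; [lra |]. rewrite Rmult_1_l. apply h_next. lia.
  - rewrite ystar_gt by lia. apply Rmult_le_compat_r; [lra |].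
    apply Rle_Rpower_l; [apply Rlt_le, Rdiv_lt_0_compat; lra |]. split.
    + apply Rdiv_lt_0_compat; [apply Rmult_lt_0_compat; [| apply h_pos; lia] |]; lra.
    + unfold Rdiv. apply Rmult_le_compat_r; [left; apply Rinv_0_lt_compat; lra |].
      apply Rmult_le_compat_l; [lra | apply h_nondecr; lia].
Qed.

Lemma excess_le i : (i <= J)%nat -> e i = SJ / INR J - h i.
Proof. intros Hi. unfold excess. now rewrite (proj2 (Nat.leb_le i J) Hi). Qed.

Lemma excess_gt i : (J < i)%nat -> e i = 0.
Proof. intros Hi. unfold excess. now rewrite (proj2 (Nat.leb_gt i J) Hi). Qed.

Lemma rsum_excess_prefix m : (m <= J)%nat -> rsum e 1 m = INR m * (SJ / INR J) - rsum h 1 m.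
Proof.
  intros Hm. rewrite (rsum_ext _ (fun i => SJ / INR J - h i)) by (intros; apply excess_le; lia).
  rewrite rsum_minus, rsum_const. now replace (S m - 1)%nat with m by lia.
Qed.

Lemma rsum_excess_tail j : (J < j)%nat -> rsum e j np = 0.
Proof. intros Hj. apply rsum_zero. intros. apply excess_gt. lia. Qed.

Lemma rsum_excess : rsum e 1 np = 0.
Proof.
  pose proof INR_J_pos.
  rewrite (rsum_split _ 1 J np), rsum_excess_prefix, rsum_excess_tail by lia.
  change (rsum h 1 J) with SJ. field. lra.
Qed.

Lemma rsum_excess_suffix_nonneg j : (1 <= j)%nat -> 0 <= rsum e j np.
Proof.
  intros Hj. pose proof INR_J_pos.
  destruct (Nat.le_gt_cases j J) as [C | C]; [| rewrite rsum_excess_tail by lia; lra].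
  pose proof rsum_excess as Htotal.
  rewrite (rsum_split _ 1 (j - 1) np), rsum_excess_prefix in Htotal by lia.
  replace (S (j - 1)) with j in Htotal by lia.
  pose proof (h_prefix_mean (j - 1) ltac:(lia)).
  assert (INR (j - 1) * (SJ / INR J) <= rsum h 1 (j - 1)).
  { apply Rmult_le_reg_l with (INR J); [lra |].
    replace (INR J * (INR (j - 1) * (SJ / INR J))) with (INR (j - 1) * SJ) by (field; lra).
    lra. }
  lra.
Qed.

Let kappa : R := INR J / SJ * Rpower Y (ab - 1).

Lemma kappa_pos : 0 < kappa.
Proof.
  pose proof INR_J_pos. pose proof Ssum_pos.
  apply Rmult_lt_0_compat; [apply Rdiv_lt_0_compat; lra | apply Rpower_pos].
Qed.

Lemma ystar_pow_excess j : (1 <= j <= np)%nat -> Rpower (y j) (ab - 1) = kappa * (h j + e j).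
Proof.
  intros Hj. pose proof INR_J_pos. pose proof Ssum_pos. pose proof Ybig_pos.
  unfold kappa. destruct (Nat.le_gt_cases j J) as [C | C].
  - rewrite ystar_le, excess_le by lia. field. lra.
  - rewrite ystar_gt, excess_gt by lia.
    assert (Hratio : 0 < INR J * h j / SJ)
      by (apply Rdiv_lt_0_compat; [apply Rmult_lt_0_compat; [| apply h_pos; lia] |]; lra).
    rewrite <- Rpower_mult_distr, Rpower_mult by (auto using Rpower_pos).
    replace (p * (ab - 1)) with 1 by (unfold abar; field; lra).
    rewrite Rpower_1 by exact Hratio. field. lra.
Qed.

Lemma ystar_budget : rsum (fun j => h j * y j) 1 np = v.
Proof.
  pose proof INR_J_pos. pose proof Ssum_pos.
  set (Q := rsum (fun j => Rpower (h j) (1 / (1 - alpha))) (J + 1) np).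
  assert (HQ : 0 <= Q) by (apply rsum_nonneg; intros; left; apply Rpower_pos).
  assert (Hexp : 1 / (1 - alpha) = 1 + p) by (field; lra).
  rewrite (rsum_split _ 1 J np) by lia.
  rewrite (rsum_ext _ (fun j => Y * h j) 1 J) by (intros; rewrite ystar_le by lia; ring).
  rewrite (rsum_ext _ (fun j => Y * Rpower (INR J) p / Rpower SJ p *
                                Rpower (h j) (1 / (1 - alpha))) (S J) np).
  2: { intros i Hi. pose proof (h_pos i ltac:(lia)).
       rewrite ystar_gt by lia. rewrite Hexp, Rpower_plus, Rpower_1 by lra.
       rewrite Rpower_div, <- Rpower_mult_distr by (try apply Rmult_lt_0_compat; lra).
       field. apply Rgt_not_eq, Rpower_pos. }
  rewrite !rsum_scal. replace (S J) with (J + 1)%nat by lia. fold Q.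
  change (rsum h 1 J) with SJ.
  unfold Ybig. fold Q. rewrite Hexp, Rpower_plus, Rpower_1 by lra.
  pose proof (Rpower_pos SJ p). pose proof (Rpower_pos (INR J) p).
  field. split; [| lra]. nra.
Qed.

Lemma rsum_ystar_pow_abar : rsum (fun j => Rpower (y j) ab) 1 np = kappa * v.
Proof.
  rewrite (rsum_ext _ (fun j => kappa * (h j * y j) + kappa * (Y * e j))).
  - rewrite rsum_plus, !rsum_scal, ystar_budget, rsum_excess. ring.
  - intros j Hj.
    replace ab with (1 + (ab - 1)) by ring.
    rewrite Rpower_plus, Rpower_1, ystar_pow_excess by (auto using ystar_pos).
    destruct (Nat.le_gt_cases j J) as [C | C].
    + rewrite ystar_le by lia. ring.
    + rewrite excess_gt by lia. ring.
Qed.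

Lemma mu_excess j : (1 <= j)%nat -> mu W N np J alpha v j = ab * kappa * rsum e j np.
Proof.
  intros Hj. unfold mu. rewrite rsum_ystar_pow_abar.
  rewrite (rsum_ext (fun i => Rpower (y i) (ab - 1)) (fun i => kappa * h i + kappa * e i))
    by (intros; rewrite ystar_pow_excess by lia; ring).
  rewrite rsum_plus, !rsum_scal. field. lra.
Qed.

Lemma Lambda_excess : Lambda W N np J alpha v = - (ab * kappa).
Proof. unfold Lambda. rewrite rsum_ystar_pow_abar. field. lra. Qed.

Theorem ystar_kkt :
  let m := mu W N np J alpha v in
  let L := Lambda W N np J alpha v in
  (forall j, (1 <= j <= np - 1)%nat ->
     ab * Rpower (y j) (ab - 1) + m (j + 1)%nat - m j + L * h j = 0) /\
  ab * Rpower (y np) (ab - 1) - m np + L * h np = 0 /\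
  (forall j, (1 <= j <= np - 1)%nat -> m (j + 1)%nat * (y j - y (j + 1)%nat) = 0) /\
  m 1%nat * y 1%nat = 0 /\
  rsum (fun j => h j * y j) 1 np = v /\
  (forall j, (1 <= j <= np)%nat -> 0 <= m j) /\
  0 <= y 1%nat /\
  (forall j, (1 <= j <= np - 1)%nat -> y j <= y (j + 1)%nat).
Proof.
  intros m L. unfold m, L.
  split; [| split; [| split; [| split; [| split; [| split; [| split]]]]]].
  - intros j Hj. replace (j + 1)%nat with (S j) by lia.
    rewrite ystar_pow_excess, !mu_excess, Lambda_excess, (rsum_first e j np) by lia. ring.
  - rewrite ystar_pow_excess, mu_excess, Lambda_excess, rsum_single by lia. ring.
  - intros j Hj. destruct (Nat.le_gt_cases (j + 1) J) as [C | C].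
    + rewrite !ystar_le by lia. ring.
    + rewrite mu_excess, rsum_excess_tail by lia. ring.
  - rewrite mu_excess, rsum_excess by lia. ring.
  - exact ystar_budget.
  - intros j Hj. rewrite mu_excess by lia. pose proof kappa_pos.
    apply Rmult_le_pos; [| now apply rsum_excess_suffix_nonneg].
    apply Rmult_le_pos; [unfold abar; apply Rlt_le, Rdiv_lt_0_compat |]; lra.
  - apply Rlt_le, ystar_pos.
  - exact ystar_nondecr.
Qed.

End Candidate.

Theorem lemma2 (N np : nat) (alpha : R) (W : R -> R) (v : R) (J : nat) :
  (1 <= np <= N)%nat ->
  0 < alpha < 1 ->
  (forall x, unit_itv x -> unit_itv (W x)) ->
  inverse_S_shaped W -> W 0 = 0 -> W 1 = 1 ->
  0 < v ->
  is_transitional_index W N np J ->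
  let h := hplus W N np in
  let y := ystar W N np J alpha v in
  let m := mu W N np J alpha v in
  let L := Lambda W N np J alpha v in
  let ab := abar alpha in
  (forall j, (1 <= j <= np - 1)%nat ->
     ab * Rpower (y j) (ab - 1) + m (j + 1)%nat - m j + L * h j = 0) /\
  ab * Rpower (y np) (ab - 1) - m np + L * h np = 0 /\
  (forall j, (1 <= j <= np - 1)%nat -> m (j + 1)%nat * (y j - y (j + 1)%nat) = 0) /\
  m 1%nat * y 1%nat = 0 /\
  rsum (fun j => h j * y j) 1 np = v /\
  (forall j, (1 <= j <= np)%nat -> 0 <= m j) /\
  0 <= y 1%nat /\
  (forall j, (1 <= j <= np - 1)%nat -> y j <= y (j + 1)%nat).
Proof.
  intros Hnp Halpha _ HW _ _ Hv HJ.
  pose proof HJ as [HJnp _].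
  apply ystar_kkt; auto.
  - intros j Hj. apply hplus_pos; auto; lia.
  - exact (transitional_prefix_mean W N np J HJ).
  - exact (transitional_next W N np J HJ).
  - exact (transitional_nondecr W N np J HW ltac:(lia) HJ).
Qed.
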